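(* Let $\mathcal{U}=\{u_1,\ldots,u_M\}\subset\mathbb{R}\setminus\{0\}$, $u_{\min}=\min_m|u_m|$, $u_{\max}=\max_m|u_m|$, $\sigma^2>0$, $N>k\ge1$, and $\sigma_{N/k}^2=\sigma^2/\log(N/k)$. Let $h(\omega)=\sum_{m=1}^M\exp\big(\frac{|u_m|u_{\max}}{\sigma_{N/k}^2}-\frac{u_m^2}{2\sigma_{N/k}^2}+\frac{u_m\omega}{\sigma_{N/k}^2}\big)$. For $\omega\sim\mathcal{N}(0,\sigma_{N/k}^2)$, $$\mathbb{P}(h(\omega)\le1)\le(N/k)^{-C_{1,2}},\qquad C_{1,2}=\frac{(u_{\max}-u_{\min}/2)^2}{2\sigma^2}.$$ *)

From HB Require Import structures.
From mathcomp Require Import all_boot all_order all_algebra.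
From mathcomp Require Import all_classical all_reals all_analysis.
From mathcomp Require Import normal_distribution.
Set Implicit Arguments. Unset Strict Implicit. Unset Printing Implicit Defensive.
Import Order.TTheory GRing.Theory Num.Theory.
Local Open Scope ring_scope.

(* u_max = max_m |u_m| (the |u_m| are >= 0, so 0 is a neutral start) *)
Definition umax {R : realType} (M : nat) (u : 'I_M -> R) : R :=
  \big[Num.max/0]_(m < M) `|u m|.

(* u_min = min_m |u_m| (starting from u_max, which is >= every |u_m|) *)
Definition umin {R : realType} (M : nat) (u : 'I_M -> R) : R :=
  \big[Num.min/umax u]_(m < M) `|u m|.

Definition sigmaNk2 {R : realType} (sigma2 : R) (N k : nat) : R :=
  sigma2 / ln (N%:R / k%:R).

Definition hfun {R : realType} (M : nat) (u : 'I_M -> R) (sigma2 : R) (N k : nat)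
  (w : R) : R :=
  \sum_(m < M) expR (`|u m| * umax u / sigmaNk2 sigma2 N k
                     - u m ^+ 2 / (2 * sigmaNk2 sigma2 N k)
                     + u m * w / sigmaNk2 sigma2 N k).

Definition C12 {R : realType} (M : nat) (u : 'I_M -> R) (sigma2 : R) : R :=
  (umax u - umin u / 2) ^+ 2 / (2 * sigma2).

From HB Require Import structures.
From mathcomp Require Import all_boot all_order all_algebra.
From mathcomp Require Import all_classical all_reals all_analysis.
From mathcomp Require Import normal_distribution.
From mathcomp Require Import ring lra measurable_realfun.
Set Implicit Arguments. Unset Strict Implicit. Unset Printing Implicit Defensive.
Import Order.TTheory GRing.Theory Num.Theory.
Local Open Scope classical_set_scope.
Local Open Scope ring_scope.

(* On the event h(w) <= 1 the summand of h for an index m with |u_m| = u_min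
   is at most 1.  Multiplying its exponent by s/|u_m|, where s = sigma_{N/k}^2,
   gives a + sgn(u_m) w <= 0 with a = u_max - u_min/2 >= 0, so w lies in the
   half-line c^2 <= c w for c = -sgn(u_m) a.  There the N(0, s) density is at
   most exp(-c^2/2s) times the N(c, s) density, hence the event has probability
   at most exp(-a^2/2s) = (N/k)^(-C_{1,2}). *)

Section gaussian_halfspace.
Variables (R : realType) (sig c : R).
Hypothesis sig_neq0 : sig != 0.

Lemma normal_pdf0_le_shift x : c ^+ 2 <= c * x ->
  normal_pdf 0 sig x <= expR (- c ^+ 2 / (sig ^+ 2 *+ 2)) * normal_pdf c sig x.
Proof.
move=> hx; rewrite /normal_pdf (negbTE sig_neq0) /normal_fun subr0.
rewrite mulrCA ler_pM2l ?normal_peak_gt0 // -expRD ler_expR -subr_ge0.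
have t_gt0 : 0 < (sig ^+ 2 *+ 2)^-1 by rewrite invr_gt0 pmulrn_lgt0 ?exprn_even_gt0.
set t := _^-1 in t_gt0 *.
have -> : - c ^+ 2 * t + - (x - c) ^+ 2 * t - - x ^+ 2 * t = (c * x - c ^+ 2) * 2 * t
  by ring.
by rewrite !mulr_ge0 ?subr_ge0 // ltW.
Qed.

Lemma normal_prob0_le_halfspace (A : set R) : measurable A ->
  (forall x, A x -> c ^+ 2 <= c * x) ->
  (normal_prob 0 sig A <= (expR (- c ^+ 2 / (sig ^+ 2 *+ 2)))%:E)%E.
Proof.
move=> mA hA; set K := expR _.
apply: (@le_trans _ _ (\int[lebesgue_measure]_(x in A) (K%:E * (normal_pdf c sig x)%:E))%E).
  apply: ge0_le_integral => //.
  - by move=> x _; rewrite lee_fin normal_pdf_ge0.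
  - by apply/measurable_EFinP/measurable_funTS; exact: measurable_normal_pdf.
  - apply: emeasurable_funM => //.
    by apply/measurable_EFinP/measurable_funTS; exact: measurable_normal_pdf.
  - by move=> x Ax; rewrite -EFinM lee_fin normal_pdf0_le_shift // hA.
rewrite ge0_integralZl_EFin ?expR_ge0 //.
- rewrite -/(normal_prob c sig A) -[leRHS]mule1 lee_pmul2l ?lte_fin ?expR_gt0 //.
  exact: probability_le1.
- by move=> x _; rewrite lee_fin normal_pdf_ge0.
- by apply/measurable_EFinP/measurable_funTS; exact: measurable_normal_pdf.
Qed.

End gaussian_halfspace.

Lemma sum_expR_le1_le0 (R : realType) (I : finType) (F : I -> R) i :
  \sum_j expR (F j) <= 1 -> F i <= 0.
Proof.
move=> hF; rewrite -ler_expR expR0; apply: le_trans hF.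
rewrite (bigD1 i) //= lerDl; apply: sumr_ge0 => j _; exact: expR_ge0.
Qed.

Lemma exponent_le0_halfspace (R : realFieldType) (U v s x : R) :
  0 < s -> v != 0 -> 0 <= U - `|v| / 2 ->
  `|v| * U / s - v ^+ 2 / (2 * s) + v * x / s <= 0 ->
  (U - `|v| / 2) ^+ 2 <= (- Num.sg v * (U - `|v| / 2)) * x.
Proof.
move=> s_gt0 v_neq0; set a := U - _ => a_ge0 hx.
have v_gt0 : 0 < `|v| by rewrite normr_gt0.
have : `|v| * (a + Num.sg v * x) <= 0.
  have -> : `|v| * (a + Num.sg v * x) =
      (`|v| * U / s - v ^+ 2 / (2 * s) + v * x / s) * s.
    rewrite /a [in v * x](numEsg v) -[v ^+ 2]real_normK ?num_real //.
    by field; rewrite gt_eqF.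
  exact: mulr_le0_ge0 hx (ltW s_gt0).
by rewrite pmulr_rle0 // => hax; nra.
Qed.

Section hfun_facts.
Variables (R : realType) (M : nat) (u : 'I_M -> R).

Lemma normr_le_umax m : `|u m| <= umax u.
Proof. exact: le_bigmax. Qed.

Lemma umin_attained : (0 < M)%N -> exists m, umin u = `|u m|.
Proof.
move=> M_gt0.
have [m _ umin_m] := @eq_bigmin _ _ _ (umax u) (Ordinal M_gt0) xpredT (fun m => `|u m|)
  isT (fun m _ => normr_le_umax m).
by exists m; rewrite /umin.
Qed.

Lemma measurable_hfun_le (sigma2 : R) (N k : nat) (r : R) :
  measurable [set w | hfun u sigma2 N k w <= r].
Proof.
have mh : measurable_fun setT (hfun u sigma2 N k).
  apply: measurable_sum => m; apply: measurableT_comp => //.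
  by apply: measurable_funD => //; apply: measurable_funM.
rewrite -[X in measurable X]setTI.
exact: (measurable_fun_ler mh (measurable_cst r)) measurableT [set true] I.
Qed.

End hfun_facts.

(* No hypothesis on [ln r] is needed: if it vanishes both sides are 1, as x / 0 = 0. *)
Lemma expR_div_ln_powR (R : realType) (r b t : R) : r != 0 ->
  expR (- b / (2 * (t / ln r))) = r `^ (- b / (2 * t)).
Proof.
move=> r_neq0; rewrite /powR (negbTE r_neq0); congr expR.
by rewrite !invfM invrK; ring.
Qed.

Theorem lemma6 (R : realType) (M : nat) (u : 'I_M -> R) (sigma2 : R) (N k : nat) :
  (0 < M)%N -> injective u -> (forall m, u m != 0) ->
  0 < sigma2 -> (1 <= k)%N -> (k < N)%N ->
  (normal_prob 0 (Num.sqrt (sigmaNk2 sigma2 N k))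
     [set w : R | (hfun u sigma2 N k w <= 1)%R]
   <= ((N%:R / k%:R) `^ (- C12 u sigma2))%:E)%E.
Proof.
move=> M_gt0 _ u_neq0 sigma2_gt0 k_ge1 kN.
have Nk_gt1 : 1 < N%:R / k%:R :> R by rewrite ltr_pdivlMr ?ltr0n // mul1r ltr_nat.
have s_gt0 : 0 < sigmaNk2 sigma2 N k by rewrite divr_gt0 // ln_gt0.
have [m umin_m] := umin_attained u M_gt0.
set a := umax u - `|u m| / 2.
have a_ge0 : 0 <= a by rewrite /a; have := normr_le_umax u m; have := normr_ge0 (u m); lra.
have c_sqr : (- Num.sg (u m) * a) ^+ 2 = a ^+ 2.
  by rewrite exprMn sqrrN sqr_sg u_neq0 mul1r.
have sig_neq0 : Num.sqrt (sigmaNk2 sigma2 N k) != 0 by rewrite sqrtr_eq0 -ltNge.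
have tail := normal_prob0_le_halfspace (c := - Num.sg (u m) * a) sig_neq0
  (measurable_hfun_le u sigma2 N k 1).
apply/(le_trans (tail _)).
  move=> w /= /(sum_expR_le1_le0 m) hw.
  rewrite c_sqr; exact: exponent_le0_halfspace s_gt0 (u_neq0 m) a_ge0 hw.
rewrite lee_fin c_sqr sqr_sqrtr ?(ltW s_gt0) // -mulr_natl.
rewrite /sigmaNk2 expR_div_ln_powR; last by rewrite gt_eqF // (lt_trans ltr01).
by rewrite /C12 umin_m -/a mulNr.
Qed.
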